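(* Let $H$ be a hypergraph on $V=[n]$. Then $H$ is $r$-cross-free if and only if $\mathrm{cl}_r(H)$ is $r$-cross-free.
   Context: Hypergraphs on $V$ are identified with their hyperedge sets. $\mathcal K_r(n)$ is the class of hypergraphs $\mathcal E$ on $V$ satisfying: (R0) every $X\subseteq V$ with $|X|\le r$ is in $\mathcal E$; (R1) $A\in\mathcal E\Rightarrow V\setminus A\in\mathcal E$; (R2) $A,B\in\mathcal E$ and $|A\cap B|\ge r\Rightarrow A\cup B\in\mathcal E$. $\mathcal K^0_r(n)$ is the class satisfying (R0) and (R1) only. $\mathrm{cl}_r(H)$ (resp. $\mathrm{cl}^0_r(H)$) is the intersection of all hypergraphs in $\mathcal K_r(n)$ (resp. $\mathcal K^0_r(n)$) containing $H$. $A,B\subseteq V$ are $r$-orthogonal if $\mathrm{cl}_r(\{A,B\})=\mathrm{cl}^0_r(\{A,B\})$. $H$ is $r$-cross-free if every pair of its hyperedges is $r$-orthogonal. *)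

From mathcomp Require Import all_boot.
Set Implicit Arguments. Unset Strict Implicit. Unset Printing Implicit Defensive.

Section Hyper.
Variables (n r : nat).
Notation hyp := {set {set 'I_n}}.

Definition R0 (E : hyp) : bool := [forall X : {set 'I_n}, (#|X| <= r) ==> (X \in E)].
Definition R1 (E : hyp) : bool := [forall A : {set 'I_n}, (A \in E) ==> (~: A \in E)].
Definition R2 (E : hyp) : bool :=
  [forall A : {set 'I_n}, forall B : {set 'I_n},
     [&& A \in E, B \in E & r <= #|A :&: B|] ==> (A :|: B \in E)].

Definition in_K (E : hyp) : bool := [&& R0 E, R1 E & R2 E].
Definition in_K0 (E : hyp) : bool := R0 E && R1 E.

Definition cl (H : hyp) : hyp :=
  [set X | [forall E : hyp, (in_K E && (H \subset E)) ==> (X \in E)]].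
Definition cl0 (H : hyp) : hyp :=
  [set X | [forall E : hyp, (in_K0 E && (H \subset E)) ==> (X \in E)]].

Definition orthogonal (A B : {set 'I_n}) : Prop := cl [set A; B] = cl0 [set A; B].

Definition cross_free (H : hyp) : Prop :=
  forall A B, A \in H -> B \in H -> orthogonal A B.
End Hyper.

From mathcomp Require Import all_boot.
Set Implicit Arguments. Unset Strict Implicit. Unset Printing Implicit Defensive.

(* cl0(S) consists of the members of S, their complements, and the trivial
   sets X with |X| <= r or |V \ X| <= r.  Hence A and B are r-orthogonal iff
   cl0{A} U cl0{B} satisfies (R2), and cl0{X} only depends on X up to
   complement, collapsing to cl0 of the empty hypergraph for trivial X.
   Orthogonality of two members of cl0(H) thus reduces to orthogonality of two
   members of H, or to (R2) for the trivial sets, which holds because two sets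
   of size <= r meeting in r points coincide.  A cross-free hypergraph
   satisfying (R0) and (R1) also satisfies (R2), so cl0(H) is in K and cl(H),
   being contained in it, is cross-free.  Conversely H is contained in cl(H). *)

Section Closures.
Variables (n r : nat).
Notation hyp := {set {set 'I_n}}.
Implicit Types (S T E : hyp) (A B X Y Z : {set 'I_n}).

Lemma sub_cl S : S \subset cl r S.
Proof.
apply/subsetP => X XS; rewrite inE; apply/forallP => E.
by apply/implyP => /andP[_ /subsetP]; apply.
Qed.

Lemma cl_min S E : in_K r E -> S \subset E -> cl r S \subset E.
Proof.
by move=> KE SE; apply/subsetP => X; rewrite inE => /forallP /(_ E); rewrite KE SE.
Qed.

Lemma R2_cl S : R2 r (cl r S).
Proof.
apply/forallP => A; apply/forallP => B; apply/implyP => /and3P[Acl Bcl leAB].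
rewrite inE; apply/forallP => E; apply/implyP => /andP[KE SE].
have clE := subsetP (cl_min KE SE).
case/and3P: KE => _ _ /forallP /(_ A) /forallP /(_ B) /implyP; apply.
by rewrite !clE.
Qed.

Lemma sub_cl0 S : S \subset cl0 r S.
Proof.
apply/subsetP => X XS; rewrite inE; apply/forallP => E.
by apply/implyP => /andP[_ /subsetP]; apply.
Qed.

Lemma cl0_min S E : in_K0 r E -> S \subset E -> cl0 r S \subset E.
Proof.
by move=> KE SE; apply/subsetP => X; rewrite inE => /forallP /(_ E); rewrite KE SE.
Qed.

Lemma cl0_in_K0 S : in_K0 r (cl0 r S).
Proof.
apply/andP; split; apply/forallP => X; apply/implyP => hX; rewrite inE;
  apply/forallP => E; apply/implyP => /andP[K0E SE];
  case/andP: (K0E) => /forallP R0E /forallP R1E.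
  exact: (implyP (R0E X)).
by apply: (implyP (R1E X)); apply: (subsetP (cl0_min K0E SE)).
Qed.

Lemma cl0_sub_cl S : cl0 r S \subset cl r S.
Proof.
apply/subsetP => X; rewrite !inE => /forallP cl0X; apply/forallP => E.
apply/implyP => /andP[KE SE]; case/and3P: KE => R0E R1E _.
by move: (cl0X E); rewrite /in_K0 R0E R1E SE.
Qed.

Lemma in_cl0 S Z :
  (Z \in cl0 r S) = [|| #|Z| <= r, #|~: Z| <= r, Z \in S | ~: Z \in S].
Proof.
set F := [set Y : {set 'I_n} | [|| #|Y| <= r, #|~: Y| <= r, Y \in S | ~: Y \in S]].
have K0F : in_K0 r F.
  apply/andP; split; apply/forallP => X; apply/implyP; rewrite !inE ?setCK.
    by move->.
  by case/or4P=> ->; rewrite ?orbT.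
have SF : S \subset F by apply/subsetP => X XS; rewrite inE XS !orbT.
apply/idP/idP => [/(subsetP (cl0_min K0F SF))|]; first by rewrite inE.
have /andP[/forallP R0c /forallP R1c] := cl0_in_K0 S.
have Scl0 := subsetP (sub_cl0 S).
case/or4P => hZ.
- exact: (implyP (R0c _)).
- by rewrite -[Z]setCK; apply: (implyP (R1c _)); apply: (implyP (R0c _)).
- exact: Scl0.
- by rewrite -[Z]setCK; apply: (implyP (R1c _)); apply: Scl0.
Qed.

Lemma cl0_setU S T : cl0 r (S :|: T) = cl0 r S :|: cl0 r T.
Proof.
apply/setP => Z; rewrite !(in_setU, in_cl0).
by case: (#|Z| <= r); case: (#|~: Z| <= r); rewrite //= orbACA.
Qed.

Lemma cl0_sub_cl0 S T : S \subset cl0 r T -> cl0 r S \subset cl0 r T.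
Proof. exact: cl0_min (cl0_in_K0 T). Qed.

Lemma cl0_setU1 S X : X \in cl0 r S -> cl0 r (X |: S) = cl0 r S.
Proof. by move=> XS; rewrite cl0_setU; apply/setUidPr/cl0_sub_cl0; rewrite sub1set. Qed.

Lemma set0_in_cl0 S : set0 \in cl0 r S.
Proof. by rewrite in_cl0 cards0. Qed.

Lemma cl0_set1_trivial X : X \in cl0 r set0 -> cl0 r [set X] = cl0 r set0.
Proof. by move=> X0; rewrite -[[set X]]setU0 cl0_setU1. Qed.

Lemma cl0_set1C X : cl0 r [set ~: X] = cl0 r [set X].
Proof.
apply/eqP; rewrite eqEsubset !cl0_sub_cl0 //;
  by rewrite sub1set !in_cl0 !in_set1 ?setCK !eqxx !orbT.
Qed.

Lemma R2_cl0_set0 : R2 r (cl0 r (set0 : hyp)).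
Proof.
have cl00 Z : (Z \in cl0 r set0) = (#|Z| <= r) || (#|~: Z| <= r).
  by rewrite in_cl0 !in_set0 !orbF.
apply/forallP => U; apply/forallP => W; apply/implyP.
rewrite !cl00 setCU => /and3P[/orP[hU | hU] /orP[hW | hW] leUW]; last 3 first.
- by rewrite (leq_trans (subset_leq_card (subsetIr _ _)) hW) orbT.
- by rewrite (leq_trans (subset_leq_card (subsetIl _ _)) hU) orbT.
- by rewrite (leq_trans (subset_leq_card (subsetIr _ _)) hW) orbT.
have UsubW : U \subset W.
  by apply/setIidPl/eqP; rewrite eqEcard subsetIl (leq_trans hU leUW).
by rewrite (setUidPr UsubW) hW.
Qed.

Lemma cl0_anchor S X : X \in cl0 r S ->
  exists2 A, A \in set0 |: S & cl0 r [set X] = cl0 r [set A].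
Proof.
rewrite in_cl0 => /or4P[hX | hX | XS | XCS].
- by exists set0; rewrite ?setU11 // !cl0_set1_trivial ?set0_in_cl0 // in_cl0 hX.
- by exists set0; rewrite ?setU11 // !cl0_set1_trivial ?set0_in_cl0 // in_cl0 hX orbT.
- by exists X; rewrite ?setU1r.
- by exists (~: X); rewrite ?setU1r // cl0_set1C.
Qed.

Lemma orthogonalE A B :
  orthogonal r A B <-> R2 r (cl0 r [set A] :|: cl0 r [set B]).
Proof.
rewrite /orthogonal -cl0_setU; split=> [<- | R2AB]; first exact: R2_cl.
apply/eqP; rewrite eqEsubset cl0_sub_cl andbT.
have /andP[R0c R1c] := cl0_in_K0 [set A; B].
by apply: cl_min (sub_cl0 _); rewrite /in_K R0c R1c.
Qed.

Lemma orthogonal_sym A B : orthogonal r A B -> orthogonal r B A.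
Proof. by move/orthogonalE; rewrite setUC => /orthogonalE. Qed.

Lemma orthogonal_trivial X B :
  X \in cl0 r set0 -> orthogonal r B B -> orthogonal r X B.
Proof.
move=> X0 /orthogonalE; rewrite setUid => R2B; apply/orthogonalE.
by rewrite cl0_set1_trivial // (setUidPr (cl0_sub_cl0 (sub0set _))).
Qed.

Lemma cross_free_subset S T : T \subset S -> cross_free r S -> cross_free r T.
Proof. by move=> /subsetP TS cfS A B /TS AS /TS BS; exact: cfS. Qed.

Lemma cross_free_setU0 S : cross_free r S -> cross_free r (set0 |: S).
Proof.
move=> cfS A B; rewrite !in_setU1 => /predU1P[-> | AS] /predU1P[-> | BS].
- apply/orthogonalE; rewrite setUid cl0_set1_trivial ?set0_in_cl0 //.
  exact: R2_cl0_set0.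
- exact: orthogonal_trivial (set0_in_cl0 _) (cfS B B BS BS).
- exact: orthogonal_sym (orthogonal_trivial (set0_in_cl0 _) (cfS A A AS AS)).
- exact: cfS.
Qed.

Lemma cross_free_cl0 S : cross_free r S -> cross_free r (cl0 r S).
Proof.
move=> /cross_free_setU0 cf0S X Y /cl0_anchor[A AS eXA] /cl0_anchor[B BS eYB].
by apply/orthogonalE; rewrite eXA eYB; apply/orthogonalE/cf0S.
Qed.

Lemma in_K_cross_free E : in_K0 r E -> cross_free r E -> in_K r E.
Proof.
move=> K0E cfE; case/andP: (K0E) => R0E R1E; apply/and3P; split => //.
apply/forallP => U; apply/forallP => W; apply/implyP => /and3P[UE WE leUW].
have R2UW : R2 r (cl0 r [set U; W]) by rewrite cl0_setU; apply/orthogonalE/cfE.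
have sUW := subsetP (sub_cl0 [set U; W]).
have UW_E : [set U; W] \subset E by apply/subsetP => Z /set2P[] ->.
apply: (subsetP (cl0_min K0E UW_E)).
move: R2UW => /forallP /(_ U) /forallP /(_ W) /implyP; apply.
by rewrite !sUW ?set21 ?set22.
Qed.

End Closures.

Theorem mainTheorem18 (n r : nat) (H : {set {set 'I_n}}) :
  cross_free r H <-> cross_free r (cl r H).
Proof.
split=> [cfH | cfclH]; last exact: cross_free_subset (sub_cl r H) cfclH.
have cfcl0 := cross_free_cl0 cfH.
have Kcl0 := in_K_cross_free (cl0_in_K0 r H) cfcl0.
exact: cross_free_subset (cl_min Kcl0 (sub_cl0 r H)) cfcl0.
Qed.
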